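(* Let $\Delta:M_n\to M_n$ be a weak-2-local derivation, let $p_1,\ldots,p_n$ be mutually orthogonal minimal projections in $M_n$, and let $q=1-p_n$. Suppose that $\Delta$ is symmetric (i.e. $\Delta(a^* )^*=\Delta(a)$ for all $a\in M_n$) and $\Delta(qa)=0$ for every $a\in M_n$. Then $\Delta(qa+p_naq)=0$ for every $a\in M_n$.
   Context: $M_n=M_n(\mathbb{C})$. A derivation on $M_n$ is a linear map $D$ with $D(ab)=D(a)b+aD(b)$. A (not necessarily linear) map $\Delta:M_n\to M_n$ is a weak-2-local derivation if for every $a,b\in M_n$ and every $\phi\in M_n^*$ there exists a derivation $D_{a,b,\phi}$ such that $\phi\Delta(a)=\phi D_{a,b,\phi}(a)$ and $\phi\Delta(b)=\phi D_{a,b,\phi}(b)$. *)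

From mathcomp Require Import all_boot all_algebra.
From mathcomp Require Import reals complex.
Set Implicit Arguments. Unset Strict Implicit. Unset Printing Implicit Defensive.
Import GRing.Theory Num.Theory.
Local Open Scope ring_scope.

Definition adjmx (R : realType) (n : nat) (a : 'M[R[i]]_n) : 'M[R[i]]_n :=
  (map_mx Num.conj a)^T.

Definition is_functional (R : realType) (n : nat) (phi : 'M[R[i]]_n -> R[i]) :=
  forall (c : R[i]) (x y : 'M[R[i]]_n), phi (c *: x + y) = c * phi x + phi y.

Definition is_derivation (R : realType) (n : nat) (D : 'M[R[i]]_n -> 'M[R[i]]_n) :=
  (forall (c : R[i]) (x y : 'M[R[i]]_n), D (c *: x + y) = c *: D x + D y) /\
  (forall x y : 'M[R[i]]_n, D (x *m y) = D x *m y + x *m D y).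

Definition weak_2_local_derivation (R : realType) (n : nat)
    (Delta : 'M[R[i]]_n -> 'M[R[i]]_n) :=
  forall (a b : 'M[R[i]]_n) (phi : 'M[R[i]]_n -> R[i]), is_functional phi ->
    exists D, is_derivation D /\ phi (Delta a) = phi (D a) /\ phi (Delta b) = phi (D b).

Definition is_projection (R : realType) (n : nat) (p : 'M[R[i]]_n) :=
  adjmx p = p /\ p *m p = p.

(* Minimal projection: a nonzero projection with no projection strictly
   between 0 and p (e <= p means e = e p). *)
Definition is_minimal_projection (R : realType) (n : nat) (p : 'M[R[i]]_n) :=
  is_projection p /\ p <> 0 /\
  forall e : 'M[R[i]]_n, is_projection e -> e *m p = e -> e = 0 \/ e = p.

From mathcomp Require Import all_boot all_algebra.
From mathcomp Require Import reals complex zify.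
Set Implicit Arguments. Unset Strict Implicit. Unset Printing Implicit Defensive.
Import GRing.Theory Num.Theory.
Local Open Scope ring_scope.

(* A derivation D of M_n has traceless values (tr D(e_ij) = 0 by moving factors of matrix
   units around the trace), hence also tr (x D x) = tr (D (x^2)) / 2 = 0.  For a weak-2-local
   derivation Delta, testing against the functional w |-> tr ((y - z) w) then gives
   tr ((y - z) Delta y) = tr ((y - z) D (y - z)) = 0 whenever Delta z = 0, so tr (z Delta y) = 0
   for every z in the zero set of Delta (which contains 0).  By hypothesis and symmetry, with
   q = 1 - p_n, this zero set contains q M_n and M_n q; as p_n has rank one,
   B = q B + p_n B q + c p_n for every B, and tr (p_n Delta y) = tr (Delta y) - tr (q Delta y) = 0.
   So tr (B Delta y) = 0 for all B: Delta vanishes identically. *)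

Lemma mxtrace_delta_mul (R : pzRingType) n (A : 'M[R]_n) i j :
  \tr (delta_mx j i *m A) = A i j.
Proof.
rewrite /mxtrace (bigD1 j) //= big1 ?addr0 => [|k /negbTE neq_kj]; rewrite !mxE.
  rewrite (bigD1 i) //= big1 ?addr0 => [|l /negbTE neq_li]; first by rewrite !mxE !eqxx mul1r.
  by rewrite mxE eqxx neq_li mul0r.
by rewrite big1 // => l _; rewrite mxE neq_kj mul0r.
Qed.

Lemma mxtrace_mul_eq0 (R : pzRingType) n (A : 'M[R]_n) :
  (forall B, \tr (B *m A) = 0) -> A = 0.
Proof. by move=> trBA0; apply/matrixP => i j; rewrite mxE -mxtrace_delta_mul. Qed.

Lemma idem_row_base_mul_col_base (F : fieldType) n (E : 'M[F]_n) :
  E *m E = E -> row_base E *m col_base E = 1%:M.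
Proof.
move=> idE; have [L Lcb1] := row_fullP (col_base_full E).
have [R rbR1] := row_freeP (row_base_free E).
set cb := col_base E in Lcb1 *; set rb := row_base E in rbR1 *.
have idB : cb *m rb *m (cb *m rb) = cb *m rb by rewrite mulmx_base idE.
clearbody cb rb.
have -> : rb *m cb = L *m (cb *m rb) *m (cb *m rb) *m R.
  by rewrite !mulmxA Lcb1 mul1mx -!mulmxA rbR1 mulmx1.
by rewrite -(mulmxA L) idB !mulmxA Lcb1 mul1mx rbR1.
Qed.

Lemma mxtrace_idem (F : fieldType) n (E : 'M[F]_n) :
  E *m E = E -> \tr E = (\rank E)%:R.
Proof.
by move=> idE; rewrite -{1}(mulmx_base E) mxtrace_mulC idem_row_base_mul_col_base ?mxtrace1.
Qed.

Lemma mxrank1_sandwich (F : fieldType) n (P B : 'M[F]_n) :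
  \rank P = 1%N -> exists c, P *m B *m P = c *: P.
Proof.
move=> rkP1; have := mulmx_base P; move: (col_base P) (row_base P).
rewrite rkP1 => u v <-; exists ((v *m B *m u) 0 0).
have -> : u *m v *m B *m (u *m v) = u *m (v *m B *m u) *m v by rewrite !mulmxA.
by rewrite {1}[v *m B *m u]mx11_scalar mul_mx_scalar scalemxAl.
Qed.

Lemma orthogonal_idempotents_rank1 (F : numFieldType) n (I : finType)
    (e : I -> 'M[F]_n) :
  #|I| = n -> (forall k, e k *m e k = e k) -> (forall k, e k != 0) ->
  (forall k l, k != l -> e k *m e l = 0) -> forall k, \rank (e k) = 1%N.
Proof.
move=> cardI idE nzE orthE k.
set S := \sum_l e l.
have idS : S *m S = S.
  rewrite mulmx_suml; apply: eq_bigr => l _.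
  rewrite mulmx_sumr (bigD1 l) //= big1 ?addr0 // => l' neq_l'l.
  by rewrite orthE // eq_sym.
have rkS : (\sum_l \rank (e l))%N = \rank S.
  apply/eqP; rewrite -(eqr_nat F) -mxtrace_idem // natr_sum raddf_sum /=.
  by apply/eqP/eq_bigr => l _; rewrite mxtrace_idem.
have rk_gt0 l : (0 < \rank (e l))%N by rewrite lt0n mxrank_eq0.
have : (\sum_(l | l != k) 1 <= \sum_(l | l != k) \rank (e l))%N by apply: leq_sum.
have := rank_leq_col S; rewrite -rkS (bigD1 k) //= sum1_card cardC1 cardI.
have := rk_gt0 k; lia.
Qed.

Section DerivationTrace.
Variables (F : numFieldType) (n : nat) (D : 'M[F]_n -> 'M[F]_n).
Hypothesis D_linear : forall c x y, D (c *: x + y) = c *: D x + D y.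
Hypothesis D_Leibniz : forall x y, D (x *m y) = D x *m y + x *m D y.

Lemma derD x y : D (x + y) = D x + D y.
Proof. by have := D_linear 1 x y; rewrite !scale1r. Qed.

Lemma der0 : D 0 = 0.
Proof. by apply: (addIr (D 0)); rewrite -derD !add0r. Qed.

Lemma derZ c x : D (c *: x) = c *: D x.
Proof. by have := D_linear c x 0; rewrite !addr0 der0 addr0. Qed.

Lemma der_sum (I : finType) (G : I -> 'M[F]_n) : D (\sum_i G i) = \sum_i D (G i).
Proof. exact: (big_morph D derD der0). Qed.

Lemma der1 : D 1%:M = 0.
Proof.
have := D_Leibniz 1%:M 1%:M; rewrite !mulmx1 mul1mx => D1E.
by apply: (addrI (D 1%:M)); rewrite addr0 -D1E.
Qed.

Lemma mxtrace_derC x y : \tr (D (x *m y)) = \tr (D (y *m x)).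
Proof.
by rewrite !D_Leibniz !mxtraceD addrC [\tr (D x *m y)]mxtrace_mulC [\tr (x *m D y)]mxtrace_mulC.
Qed.

Lemma mxtrace_der_delta i j : \tr (D (delta_mx i j)) = 0.
Proof.
have [<-{j}|neq_ij] := eqVneq i j; last first.
  by rewrite -(mul_delta_mx j i j) mxtrace_derC mul_delta_mx_0 1?eq_sym ?der0 ?mxtrace0.
have diagE k : \tr (D (delta_mx k k)) = \tr (D (delta_mx i i)).
  by rewrite -(mul_delta_mx i k k) mxtrace_derC mul_delta_mx.
have : \tr (D (delta_mx i i)) *+ n = 0.
  rewrite -[in X in _ *+ X](card_ord n) -sumr_const -(eq_bigr _ (fun k _ => diagE k)).
  by rewrite -raddf_sum -der_sum -mx1_sum_delta der1 raddf0.
move/eqP; rewrite mulrn_eq0 => /orP[/eqP n0|/eqP //].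
by have := ltn_ord i; rewrite {2}n0.
Qed.

Lemma mxtrace_der x : \tr (D x) = 0.
Proof.
rewrite [x]matrix_sum_delta der_sum raddf_sum /= big1 // => i _.
rewrite der_sum raddf_sum /= big1 // => j _.
by rewrite derZ mxtraceZ mxtrace_der_delta mulr0.
Qed.

Lemma mxtrace_mul_der x : \tr (x *m D x) = 0.
Proof.
have := mxtrace_der (x *m x); rewrite D_Leibniz mxtraceD mxtrace_mulC -mulr2n.
by move/eqP; rewrite mulrn_eq0 /= => /eqP.
Qed.

End DerivationTrace.

Section AdjointMatrix.
Variables (R : realType) (n : nat).
Implicit Types a b : 'M[R[i]]_n.

Lemma adjmxM a b : adjmx (a *m b) = adjmx b *m adjmx a.
Proof. by rewrite /adjmx map_mxM trmx_mul. Qed.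

Lemma adjmxB a b : adjmx (a - b) = adjmx a - adjmx b.
Proof. by rewrite /adjmx map_mxB linearB. Qed.

Lemma adjmx1 : adjmx (1%:M : 'M[R[i]]_n) = 1%:M.
Proof. by rewrite /adjmx map_mx1 trmx1. Qed.

Lemma adjmx0 : adjmx (0 : 'M[R[i]]_n) = 0.
Proof. by rewrite /adjmx map_mx0 trmx0. Qed.

End AdjointMatrix.

Section WeakTwoLocalDerivation.
Variables (R : realType) (n : nat) (Delta : 'M[R[i]]_n -> 'M[R[i]]_n).
Hypothesis Delta_w2l : weak_2_local_derivation Delta.

Lemma mxtrace_weak_2_local_der y : \tr (Delta y) = 0.
Proof.
have tr_fun : is_functional (fun w : 'M[R[i]]_n => \tr w).
  by move=> c u v; rewrite mxtraceD mxtraceZ.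
have [D [[D_linear D_Leibniz] [-> _]]] := Delta_w2l y y tr_fun.
exact: mxtrace_der.
Qed.

Lemma mxtrace_sub_weak_2_local_der y z :
  Delta z = 0 -> \tr ((y - z) *m Delta y) = 0.
Proof.
move=> Dz0; have fun_yz : is_functional (fun w => \tr ((y - z) *m w)).
  by move=> c u v; rewrite mulmxDr mxtraceD -scalemxAr mxtraceZ.
have [D [[D_linear D_Leibniz] [-> Dz]]] := Delta_w2l y z fun_yz.
rewrite Dz0 mulmx0 mxtrace0 in Dz.
rewrite -[y in D y](subrK z) derD // mulmxDr mxtraceD -Dz addr0.
exact: mxtrace_mul_der.
Qed.

Lemma mxtrace_kernel_weak_2_local_der y z :
  Delta 0 = 0 -> Delta z = 0 -> \tr (z *m Delta y) = 0.
Proof.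
move=> D00 Dz0; have -> : z = (y - 0) - (y - z) by rewrite subr0 opprB addrC subrK.
by rewrite mulmxBl raddfB /= !mxtrace_sub_weak_2_local_der ?subrr.
Qed.

Lemma weak_2_local_der_eq0 (P : 'M[R[i]]_n) :
  P *m P = P -> \rank P = 1%N ->
  (forall a, Delta ((1%:M - P) *m a) = 0) -> (forall a, Delta (a *m (1%:M - P)) = 0) ->
  forall y, Delta y = 0.
Proof.
move=> idP rkP1; set q := 1%:M - P => qM0 Mq0 y; apply: mxtrace_mul_eq0 => B.
have D00 : Delta 0 = 0 by have := qM0 0; rewrite mulmx0.
have qPE : q + P = 1%:M by rewrite subrK.
clearbody q.
have trqB : \tr (q *m B *m Delta y) = 0 by rewrite mxtrace_kernel_weak_2_local_der.
have trPBq : \tr (P *m B *m q *m Delta y) = 0 by rewrite mxtrace_kernel_weak_2_local_der.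
have trP : \tr (P *m Delta y) = 0.
  have -> : P = 1%:M - q by rewrite -qPE addrAC subrr add0r.
  rewrite mulmxBl mul1mx raddfB /= mxtrace_weak_2_local_der.
  by rewrite -[q]mulmx1 mxtrace_kernel_weak_2_local_der ?subrr.
have [c PBP] := mxrank1_sandwich B rkP1.
have -> : B = q *m B + P *m B *m q + c *: P.
  by rewrite -PBP -addrA -mulmxDr qPE mulmx1 -mulmxDl qPE mul1mx.
by rewrite !mulmxDl !mxtraceD -scalemxAl mxtraceZ trqB trPBq trP mulr0 !addr0.
Qed.

End WeakTwoLocalDerivation.

Theorem lemma2p7 (R : realType) (m : nat)
    (Delta : 'M[R[i]]_m.+1 -> 'M[R[i]]_m.+1)
    (p : 'I_m.+1 -> 'M[R[i]]_m.+1) :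
  weak_2_local_derivation Delta ->
  (forall k, is_minimal_projection (p k)) ->
  (forall k l, k != l -> p k *m p l = 0) ->
  (forall a, adjmx (Delta (adjmx a)) = Delta a) ->
  (forall a, Delta ((1%:M - p ord_max) *m a) = 0) ->
  forall a, Delta ((1%:M - p ord_max) *m a + p ord_max *m a *m (1%:M - p ord_max)) = 0.
Proof.
move=> Delta_w2l p_min p_orth Delta_sym Delta_qM0 a.
have [[adj_pmax idem_pmax] _] := p_min ord_max.
have rk_pmax : \rank (p ord_max) = 1%N.
  apply: (orthogonal_idempotents_rank1 (card_ord _)) => // k.
    by have [[_ ->]] := p_min k.
  by have [_ [/eqP]] := p_min k.
have Delta_Mq0 b : Delta (b *m (1%:M - p ord_max)) = 0.
  by rewrite -Delta_sym adjmxM adjmxB adjmx1 adj_pmax Delta_qM0 adjmx0.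
exact: weak_2_local_der_eq0 idem_pmax rk_pmax Delta_qM0 Delta_Mq0 _.
Qed.
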